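(* Let $A$ be a block tridiagonal matrix satisfying the standing hypotheses (H), and write $A^{-1}=[Z_{ij}]$ with $Z_{ij}\in\mathbb{C}^{m\times m}$, $i,j=1,\dots,n$. Then $$\|Z_{ij}\|\le \|Z_{jj}\|\prod_{k=i}^{j-1}\tau_k\quad\text{for all } i<j,\qquad \|Z_{ij}\|\le \|Z_{jj}\|\prod_{k=j+1}^{i}\omega_k\quad\text{for all } i>j.$$ Moreover, for $i=1,\dots,n$, $$\frac{\|I\|}{\|A_i\|+\tau_{i-1}\|C_{i-1}\|+\omega_{i+1}\|B_i\|}\le\|Z_{ii}\|,$$ and, whenever $\|A_i^{-1}\|^{-1}-\tau_{i-1}\|C_{i-1}\|-\omega_{i+1}\|B_i\|>0$, $$\|Z_{ii}\|\le\frac{\|I\|}{\|A_i^{-1}\|^{-1}-\tau_{i-1}\|C_{i-1}\|-\omega_{i+1}\|B_i\|},$$ where $C_0=B_n=0$ and $\tau_0=\omega_{n+1}=0$.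
   Context: $\|\cdot\|$ is a submultiplicative matrix norm on $\mathbb{C}^{m\times m}$, $n\ge 2$, and $A$ is block tridiagonal with diagonal blocks $A_1,\dots,A_n$, superdiagonal blocks $B_1,\dots,B_{n-1}$ (block $(i,i+1)$) and subdiagonal blocks $C_1,\dots,C_{n-1}$ (block $(i+1,i)$), all in $\mathbb{C}^{m\times m}$; set $C_0=B_n=0$. Standing hypotheses (H): $A$ is nonsingular; $B_i$ and $C_i$ are nonsingular for $i=1,\dots,n-1$; every $A_i$ is nonsingular and $\|A_i^{-1}C_{i-1}\|+\|A_i^{-1}B_i\|\le 1$ for $i=1,\dots,n$ (row block diagonal dominance); and $\|A_1^{-1}B_1\|<1$, $\|A_n^{-1}C_{n-1}\|<1$. For $i=1,\dots,n$: $\tau_i=\dfrac{\|A_i^{-1}B_i\|}{1-\|A_i^{-1}C_{i-1}\|}$ and $\omega_i=\dfrac{\|A_i^{-1}C_{i-1}\|}{1-\|A_i^{-1}B_i\|}$. *)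

From HB Require Import structures.
From mathcomp Require Import all_boot all_order all_algebra.
Set Implicit Arguments. Unset Strict Implicit. Unset Printing Implicit Defensive.
Import Order.TTheory GRing.Theory Num.Theory.
Local Open Scope ring_scope.

(* A submultiplicative matrix norm on 'M[C]_m, C a numeric closed field
   (the complex-number structure of MathComp; e.g. algC).  Values lie in C
   and are nonnegative (hence real). *)
Definition submult_mxnorm (C : numClosedFieldType) (m : nat)
  (nrm : 'M[C]_m -> C) : Prop :=
  [/\ (forall X, 0 <= nrm X),
      (forall X, nrm X = 0 -> X = 0),
      (forall (a : C) X, nrm (a *: X) = `|a| * nrm X),
      (forall X Y, nrm (X + Y) <= nrm X + nrm Y) &
      (forall X Y, nrm (X *m Y) <= nrm X * nrm Y)].

Definition bsz (n m : nat) : 'I_n -> nat := fun _ => m.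
Arguments bsz : clear implicits.

(* Block tridiagonal matrix, paper's 1-based indexing of the block
   sequences Ab (diagonal A_i), Bb (superdiagonal B_i at (i,i+1)),
   Cb (subdiagonal C_i at (i+1,i)); the block with 0-based index (i,j)
   is the paper's block (i+1,j+1). *)
Definition tridiag (C : numClosedFieldType) (n m : nat)
  (Ab Bb Cb : nat -> 'M[C]_m) : 'M[C]_(\sum_(i < n) bsz n m i) :=
  @mxblock C n n (bsz n m) (bsz n m)
    (fun i j => if val j == val i then Ab (val i).+1
                else if val j == (val i).+1 then Bb (val i).+1
                else if val i == (val j).+1 then Cb (val j).+1
                else 0).

Definition blk (C : numClosedFieldType) (n m : nat)
  (Z : 'M[C]_(\sum_(i < n) bsz n m i)) (i j : 'I_n) : 'M[C]_m :=
  @submxblock C n n (bsz n m) (bsz n m) Z i j.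

Definition Cext (C : numClosedFieldType) (m : nat) (Cb : nat -> 'M[C]_m) (i : nat)
  : 'M[C]_m := if i == 0%N then 0 else Cb i.
Definition Bext (C : numClosedFieldType) (n m : nat) (Bb : nat -> 'M[C]_m) (i : nat)
  : 'M[C]_m := if i == n then 0 else Bb i.

Definition tau (C : numClosedFieldType) (n m : nat) (nrm : 'M[C]_m -> C)
  (Ab Bb Cb : nat -> 'M[C]_m) (i : nat) : C :=
  if i == 0%N then 0 else
  nrm (invmx (Ab i) *m Bext n Bb i) / (1 - nrm (invmx (Ab i) *m Cext Cb i.-1)).

Definition omega (C : numClosedFieldType) (n m : nat) (nrm : 'M[C]_m -> C)
  (Ab Bb Cb : nat -> 'M[C]_m) (i : nat) : C :=
  if i == n.+1 then 0 else
  nrm (invmx (Ab i) *m Cext Cb i.-1) / (1 - nrm (invmx (Ab i) *m Bext n Bb i)).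

(* Fix a column j of Z = A^-1.  Block row i of A Z = I reads
   C_(i-1) Z_(i-1,j) + A_i Z_ij + B_i Z_(i+1,j) = delta_ij I, so N_i = ||Z_ij||
   satisfies N_i <= ||A_i^-1 C_(i-1)|| N_(i-1) + ||A_i^-1 B_i|| N_(i+1) for i <> j.
   Sweeping down from the first row, this gives N_i <= tau_i N_(i+1) for i < j,
   and sweeping up from the last row N_i <= omega_i N_(i-1) for i > j: row
   dominance makes tau_i, omega_i <= 1, which is what keeps the induction going,
   and the nonsingularity of the B_i, C_i makes the denominators positive.
   Chaining gives the off-diagonal bounds; feeding N_(i-1) <= tau_(i-1) N_i and
   N_(i+1) <= omega_(i+1) N_i into the diagonal equation bounds ||Z_ii|| from
   both sides. *)

From HB Require Import structures.
From mathcomp Require Import all_boot all_order all_algebra zify.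
Import Order.TTheory GRing.Theory Num.Theory.
Local Open Scope ring_scope.
Set Implicit Arguments. Unset Strict Implicit.

Section RealBounds.
Variable F : numFieldType.

Lemma ler_absorb (a b u x y : F) :
  0 <= a -> a < 1 -> u <= x -> x <= a * u + b * y -> x <= b / (1 - a) * y.
Proof.
move=> a0 a1 ux h.
rewrite mulrAC ler_pdivlMr ?subr_gt0 // mulrBr mulr1 lerBlDr.
by apply: le_trans h _; rewrite addrC lerD2l mulrC ler_wpM2r.
Qed.

Lemma ler_div_of_le_mul (c d x : F) :
  0 <= d -> 0 <= x -> c <= d * x -> c / d <= x.
Proof.
rewrite le_eqVlt => /orP[/eqP<- x0 _|d0 _ h]; first by rewrite invr0 mulr0.
by rewrite ler_pdivrMr // mulrC.
Qed.

Lemma ler_div_of_le_mulD (al e s x : F) :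
  0 <= s -> 0 < al^-1 - s -> x <= al * (e + s * x) -> x <= e / (al^-1 - s).
Proof.
move=> s0 pos h.
have al0 : 0 < al.
  rewrite lt0r; apply/andP; split.
    by apply: contraTneq (pos) => ->; rewrite invr0 sub0r oppr_gt0 le_gtF.
  by move: pos; rewrite subr_gt0 => /(le_lt_trans s0); rewrite invr_gt0 => /ltW.
by rewrite ler_pdivlMr // mulrBr lerBlDr ler_pdivrMr // mulrC [x * s]mulrC.
Qed.

End RealBounds.

Section DecayAlongColumn.
Variables (F : numFieldType) (n j : nat) (a b N : nat -> F).
Hypotheses (a_ge0 : forall i, 0 <= a i) (b_ge0 : forall i, 0 <= b i).
Hypothesis ab_le1 : forall i, (i < n)%N -> a i + b i <= 1.
Hypothesis a_lt1 : forall i, (i.+1 < n)%N -> a i < 1.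
Hypothesis b_lt1 : forall i, (0 < i < n)%N -> b i < 1.
Hypotheses (N_ge0 : forall i, 0 <= N i) (N_n : N n = 0).
Hypothesis N_rec : forall i, (i < n)%N -> i != j ->
  N i <= a i * N i.-1 + b i * N i.+1.
(* N i stands for the norm of the block (i, j) of the inverse; at the first row
   [N_rec] mentions N 0.-1 = N 0, which is harmless. *)

Local Notation t i := (b i / (1 - a i)).
Local Notation w i := (a i / (1 - b i)).

Lemma decay_t_ge0 i : (i.+1 < n)%N -> 0 <= t i.
Proof. by move=> hi; rewrite divr_ge0 // subr_ge0 ltW ?a_lt1. Qed.

Lemma decay_t_le1 i : (i.+1 < n)%N -> t i <= 1.
Proof.
move=> hi; rewrite ler_pdivrMr ?subr_gt0 ?a_lt1 // mul1r lerBrDr addrC.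
exact/ab_le1/ltnW.
Qed.

Lemma decay_w_ge0 i : (0 < i < n)%N -> 0 <= w i.
Proof. by move=> hi; rewrite divr_ge0 // subr_ge0 ltW ?b_lt1. Qed.

Lemma decay_w_le1 i : (0 < i < n)%N -> w i <= 1.
Proof.
move=> /andP[i0 hi]; rewrite ler_pdivrMr ?subr_gt0 ?b_lt1 ?i0 // mul1r lerBrDr.
exact: ab_le1.
Qed.

Lemma decay_above i : (i < j)%N -> (j < n)%N -> N i <= t i * N i.+1.
Proof.
move=> + hj; elim: i => [|i IH] hij.
  by apply: ler_absorb (lexx _) (N_rec _ _) => //; try apply: a_lt1; lia.
have hi : (i.+2 < n)%N by lia.
apply: ler_absorb (N_rec _ _) => //; [apply: a_lt1; lia| |lia|lia].
apply: le_trans (IH (ltnW hij)) _; apply: ler_piMl => //.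
by apply: decay_t_le1; lia.
Qed.

Lemma decay_below_aux k i : (i + k).+1 = n -> (j < i)%N -> N i <= w i * N i.-1.
Proof.
elim: k i => [|k IH] i hik hji; apply: (@ler_absorb _ (b i) (a i) (N i.+1)) => //.
- by apply: b_lt1; lia.
- by rewrite (_ : i.+1 = n) ?N_n //; lia.
- by rewrite addrC; apply: N_rec; lia.
- by apply: b_lt1; lia.
- apply: le_trans (IH i.+1 _ _) _; rewrite ?addSnnS //; try lia.
  by apply: ler_piMl => //; apply: decay_w_le1; lia.
- by rewrite addrC; apply: N_rec; lia.
Qed.

Lemma decay_below i : (j < i)%N -> (i < n)%N -> N i <= w i * N i.-1.
Proof. by move=> hji hi; apply: (@decay_below_aux (n - i.+1)) => //; lia. Qed.

Lemma decay_prod_above i : (i <= j)%N -> (j < n)%N ->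
  N i <= N j * \prod_(i <= k < j) t k.
Proof.
move=> + hj; move Hd : (j - i)%N => d; elim: d i Hd => [|d IH] i hd hij.
  by rewrite (_ : i = j) ?big_geq ?mulr1 //; lia.
rewrite big_ltn; last lia.
apply: le_trans (decay_above _ _) _ => //; first lia.
rewrite mulrCA ler_wpM2l ?IH //; try lia.
by apply: decay_t_ge0; lia.
Qed.

Lemma decay_prod_below i : (j <= i)%N -> (i < n)%N ->
  N i <= N j * \prod_(j.+1 <= k < i.+1) w k.
Proof.
elim: i => [|i IH] hji hi.
  by rewrite (_ : j = 0%N) ?big_geq ?mulr1 //; lia.
have [->|hji'] := eqVneq j i.+1; first by rewrite big_geq // mulr1.
rewrite big_nat_recr /=; last lia.
apply: le_trans (decay_below _ _) _ => //; first lia.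
rewrite mulrA mulrC ler_wpM2r ?IH //; try lia.
by apply: decay_w_ge0; lia.
Qed.

End DecayAlongColumn.

Section SubmultNorm.
Variables (C : numClosedFieldType) (m : nat) (nrm : 'M[C]_m -> C).
Hypothesis nrmP : submult_mxnorm nrm.

Lemma nrm_ge0 X : 0 <= nrm X. Proof. by case: nrmP. Qed.
Lemma nrmD_le X Y : nrm (X + Y) <= nrm X + nrm Y. Proof. by case: nrmP. Qed.
Lemma nrmM_le X Y : nrm (X *m Y) <= nrm X * nrm Y. Proof. by case: nrmP. Qed.

Lemma nrm0 : nrm 0 = 0.
Proof. by case: nrmP => _ _ nrmZ _ _; rewrite -(scale0r 0) nrmZ normr0 mul0r. Qed.

Lemma nrmN X : nrm (- X) = nrm X.
Proof. by case: nrmP => _ _ nrmZ _ _; rewrite -scaleN1r nrmZ normrN1 mul1r. Qed.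

Lemma nrm_unit_gt0 X : (0 < m)%N -> X \in unitmx -> 0 < nrm X.
Proof.
move=> m_gt0 Xu; rewrite lt0r nrm_ge0 andbT.
apply: contraTneq Xu; case: nrmP => _ nrm_eq0 _ _ _ /nrm_eq0 ->.
by rewrite unitmxE -(scale0r 1%:M) detZ expr0n (gtn_eqF m_gt0) mul0r unitr0.
Qed.

Lemma nrm_lt1_of_addr_le1 X Y : nrm X + nrm Y <= 1 -> Y \in unitmx -> nrm X < 1.
Proof.
move=> XY1 Yu; have [m0|m_gt0] := posnP m.
  suff -> : X = 0 by rewrite nrm0 ltr01.
  by apply/matrixP => i; have := ltn_ord i; rewrite {2}m0.
by apply: lt_le_trans XY1; rewrite ltrDl nrm_unit_gt0.
Qed.

Lemma nrm_three_term_solve (A P Q X Y W : 'M[C]_m) : A \in unitmx ->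
  P *m Y + A *m X + Q *m W = 0 ->
  nrm X <= nrm (invmx A *m P) * nrm Y + nrm (invmx A *m Q) * nrm W.
Proof.
move=> Au /eqP; rewrite -addrA [A *m X + _]addrC addrA addr_eq0 => /eqP AX.
rewrite -(mulKmx Au X) -[A *m X]opprK -AX mulmxN nrmN mulmxDr !mulmxA.
by apply: le_trans (nrmD_le _ _) _; apply: lerD; apply: nrmM_le.
Qed.

Lemma nrm_three_term_lower (A P Q X : 'M[C]_m) :
  P + A *m X + Q = 1%:M -> nrm 1%:M <= nrm A * nrm X + (nrm P + nrm Q).
Proof.
move=> <-; rewrite [P + _]addrC -addrA.
apply: le_trans (nrmD_le _ _) _; apply: lerD; first exact: nrmM_le.
exact: nrmD_le.
Qed.

Lemma nrm_three_term_upper (A P Q X : 'M[C]_m) : A \in unitmx ->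
  P + A *m X + Q = 1%:M -> nrm X <= nrm (invmx A) * (nrm 1%:M + (nrm P + nrm Q)).
Proof.
move=> Au E.
have AX : A *m X = 1%:M - (P + Q).
  by apply: (canRL (addrK _)); rewrite -E addrCA addrA.
rewrite -(mulKmx Au X) AX; apply: le_trans (nrmM_le _ _) _.
rewrite ler_wpM2l ?nrm_ge0 //; apply: le_trans (nrmD_le _ _) _.
by rewrite nrmN lerD2l nrmD_le.
Qed.

End SubmultNorm.

(* Blocks indexed by nat, with junk value 0 outside the matrix, so that the
   boundary rows satisfy the same three-term recurrence. *)
Definition blk_nat (C : numClosedFieldType) (m n : nat)
  (Z : 'M[C]_(\sum_(i < n) bsz n m i)) (i j : nat) : 'M[C]_m :=
  if insub i is Some i' then if insub j is Some j' then blk Z i' j' else 0 else 0.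

Section TridiagonalInverse.
Variables (C : numClosedFieldType) (m n : nat) (Ab Bb Cb : nat -> 'M[C]_m).
Hypothesis T_unit : tridiag n Ab Bb Cb \in unitmx.

Local Notation Z := (blk_nat (invmx (tridiag n Ab Bb Cb))).

Lemma blk_natE (i j : 'I_n) : Z i j = blk (invmx (tridiag n Ab Bb Cb)) i j.
Proof. by rewrite /blk_nat !valK. Qed.

Lemma blk_nat_out i j : (n <= i)%N -> Z i j = 0.
Proof. by move=> ni; rewrite /blk_nat insubN // -leqNgt. Qed.

Lemma Bext_mul_blk_nat i j :
  Bext n Bb i *m Z i j = if (i < n)%N then Bb i *m Z i j else 0.
Proof.
rewrite /Bext; case: ltnP => ni; first by rewrite ltn_eqF.
by rewrite blk_nat_out // mulmx0.
Qed.

Lemma tridiag_mulV_blk (i j : 'I_n) :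
  \sum_(k < n) ((if val k == val i then Ab (val i).+1
                 else if val k == (val i).+1 then Bb (val i).+1
                 else if val i == (val k).+1 then Cb (val k).+1
                 else 0) *m Z k j)
  = if i == j then 1%:M else 0.
Proof.
under eq_bigr do rewrite blk_natE.
have := mulmxV T_unit.
rewrite {1}/tridiag -{1}(submxblockK (invmx (tridiag n Ab Bb Cb))) mul_mxblock.
rewrite -(mxdiagZ (p_ := bsz n m) 1).
move/(congr1 (fun M => submxblock M i j)); rewrite /mxdiag !mxblockK.
by rewrite conform_mx_id => ->.
Qed.

Lemma tridiag_inv_recurrence i j : (i < n)%N -> (j < n)%N ->
  Cext Cb i *m Z i.-1 j + Ab i.+1 *m Z i j + Bext n Bb i.+1 *m Z i.+1 j
   = if i == j then 1%:M else 0.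
Proof.
move=> hi hj; have := tridiag_mulV_blk (Ordinal hi) (Ordinal hj).
rewrite -(inj_eq val_inj) /= => <-.
rewrite (eq_bigr (fun k : 'I_n =>
     (if k == i :> nat then Ab i.+1 *m Z k j else 0)
   + (if k == i.+1 :> nat then Bb i.+1 *m Z k j else 0)
   + (if k.+1 == i :> nat then Cb i *m Z k j else 0))); last first.
  move=> [k _] _ /=.
  have [->|ki] := eqVneq k i.
    by rewrite (ltn_eqF (ltnSn i)) (gtn_eqF (ltnSn i)) !addr0.
  have [->|ki1] := eqVneq k i.+1.
    by rewrite (_ : (i.+2 == i) = false) ?add0r ?addr0 //; lia.
  by rewrite !add0r eq_sym; case: eqP => [<-|_]; rewrite ?mul0mx.
rewrite !big_split /= -!big_mkcond (big_ord1_eq _ (fun k => Ab i.+1 *m Z k j)).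
rewrite (big_ord1_eq _ (fun k => Bb i.+1 *m Z k j)) hi Bext_mul_blk_nat.
case: i hi => [|i] hi /=.
  by rewrite /Cext eqxx mul0mx add0r [X in _ = _ + X]big1 ?addr0.
rewrite (big_ord1_eq _ (fun k => Cb i.+1 *m Z k j) i) (ltnW hi).
by rewrite /Cext /= [RHS]addrC addrA.
Qed.

Variable nrm : 'M[C]_m -> C.
Hypothesis nrmP : submult_mxnorm nrm.
Hypothesis BC_unit : forall i, (1 <= i < n)%N -> Bb i \in unitmx /\ Cb i \in unitmx.
Hypothesis A_dominant : forall i, (1 <= i <= n)%N ->
  Ab i \in unitmx /\
  nrm (invmx (Ab i) *m Cext Cb i.-1) + nrm (invmx (Ab i) *m Bext n Bb i) <= 1.

(* a i, b i are ||A^-1 C|| and ||A^-1 B|| of the paper's row i+1. *)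
Let a i := nrm (invmx (Ab i.+1) *m Cext Cb i).
Let b i := nrm (invmx (Ab i.+1) *m Bext n Bb i.+1).
Local Notation t := (tau n nrm Ab Bb Cb).
Local Notation w := (omega n nrm Ab Bb Cb).

Let A_unit i : (i < n)%N -> Ab i.+1 \in unitmx.
Proof. by move=> hi; case: (A_dominant (i := i.+1)). Qed.

Let ab_le1 i : (i < n)%N -> a i + b i <= 1.
Proof. by move=> hi; case: (A_dominant (i := i.+1)). Qed.

Let a_lt1 i : (i.+1 < n)%N -> a i < 1.
Proof.
move=> hi; apply: nrm_lt1_of_addr_le1 (ab_le1 (ltnW hi)) _ => //.
rewrite /Bext ltn_eqF // unitmx_mul unitmx_inv A_unit ?(BC_unit _).1 //; lia.
Qed.

Let b_lt1 i : (0 < i < n)%N -> b i < 1.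
Proof.
move=> /andP[i0 hi]; have [ein|ne] := eqVneq i.+1 n.
  by rewrite /b /Bext ein eqxx mulmx0 (nrm0 nrmP) ltr01.
apply: nrm_lt1_of_addr_le1 => //; first by rewrite addrC; apply: ab_le1.
rewrite /Cext gtn_eqF // unitmx_mul unitmx_inv A_unit ?(BC_unit _).2 //; lia.
Qed.

Let a_ge0 i : 0 <= a i. Proof. exact: nrm_ge0. Qed.
Let b_ge0 i : 0 <= b i. Proof. exact: nrm_ge0. Qed.

Lemma blk_col_recurrence j : (j < n)%N -> forall i, (i < n)%N -> i != j ->
  nrm (Z i j) <= a i * nrm (Z i.-1 j) + b i * nrm (Z i.+1 j).
Proof.
move=> hj i hi ij; apply: nrm_three_term_solve (A_unit hi) _ => //.
by rewrite tridiag_inv_recurrence // (negbTE ij).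
Qed.

Lemma blk_decay_above i j : (i <= j)%N -> (j < n)%N ->
  nrm (Z i j) <= nrm (Z j j) * \prod_(i.+1 <= k < j.+1) t k.
Proof.
move=> ij hj; rewrite big_add1 /=.
exact: (decay_prod_above a_ge0 b_ge0 ab_le1 a_lt1 (fun k => nrm_ge0 nrmP _)
          (blk_col_recurrence hj)).
Qed.

Lemma omega_succ i : (i < n)%N -> w i.+1 = a i / (1 - b i).
Proof. by move=> hi; rewrite /omega eqSS ltn_eqF. Qed.

Lemma blk_decay_below i j : (j <= i)%N -> (i < n)%N ->
  nrm (Z i j) <= nrm (Z j j) * \prod_(j.+2 <= k < i.+2) w k.
Proof.
move=> ji hi; rewrite big_add1 /= (eq_big_nat _ _ (fun k hk => omega_succ _)); last lia.
apply: (decay_prod_below a_ge0 b_ge0 ab_le1 b_lt1 (fun k => nrm_ge0 nrmP _) _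
          (blk_col_recurrence _)) => //; last lia.
by rewrite blk_nat_out // (nrm0 nrmP).
Qed.

Lemma tau_ge0 i : (i < n)%N -> 0 <= t i.
Proof.
case: i => [|i] hi; first by rewrite /tau eqxx.
by rewrite /tau /= divr_ge0 ?nrm_ge0 // subr_ge0 (ltW (a_lt1 hi)).
Qed.

Lemma omega_ge0 i : (i < n)%N -> 0 <= w i.+2.
Proof.
move=> hi; have [ein|ne] := eqVneq i.+1 n; first by rewrite /omega ein eqxx.
by rewrite omega_succ ?divr_ge0 // ?subr_ge0 ?ltW ?b_lt1 //; lia.
Qed.

Lemma nrm_sub_blk_le i : (i < n)%N ->
  nrm (Cext Cb i *m Z i.-1 i) <= t i * nrm (Cext Cb i) * nrm (Z i i).
Proof.
case: i => [|i] hi; first by rewrite /tau /Cext eqxx mul0mx (nrm0 nrmP) !mul0r.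
apply: le_trans (nrmM_le nrmP _ _) _.
rewrite [_ * nrm (Cext _ _)]mulrC -mulrA ler_wpM2l ?nrm_ge0 //.
by have := blk_decay_above (leqnSn i) hi; rewrite big_nat1 mulrC.
Qed.

Lemma nrm_super_blk_le i : (i < n)%N ->
  nrm (Bext n Bb i.+1 *m Z i.+1 i) <= w i.+2 * nrm (Bext n Bb i.+1) * nrm (Z i i).
Proof.
move=> hi; have [ein|ne] := eqVneq i.+1 n.
  by rewrite ein blk_nat_out // mulmx0 (nrm0 nrmP) /omega eqxx !mul0r.
apply: le_trans (nrmM_le nrmP _ _) _.
rewrite [_ * nrm (Bext _ _ _)]mulrC -mulrA ler_wpM2l ?nrm_ge0 //.
have := @blk_decay_below i.+1 i (leqnSn i); rewrite big_nat1 mulrC; apply; lia.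
Qed.

Lemma blk_diag_lower i : (i < n)%N ->
  nrm 1%:M / (nrm (Ab i.+1) + t i * nrm (Cext Cb i) + w i.+2 * nrm (Bext n Bb i.+1))
  <= nrm (Z i i).
Proof.
move=> hi; apply: ler_div_of_le_mul; rewrite ?nrm_ge0 //.
  by rewrite !addr_ge0 ?mulr_ge0 ?nrm_ge0 ?tau_ge0 ?omega_ge0.
have := tridiag_inv_recurrence hi hi; rewrite eqxx => /(nrm_three_term_lower nrmP).
move/le_trans; apply; rewrite -addrA !mulrDl lerD2l.
by apply: lerD; [apply: nrm_sub_blk_le|apply: nrm_super_blk_le].
Qed.

Lemma blk_diag_upper i : (i < n)%N ->
  let s := t i * nrm (Cext Cb i) + w i.+2 * nrm (Bext n Bb i.+1) in
  0 < (nrm (invmx (Ab i.+1)))^-1 - s ->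
  nrm (Z i i) <= nrm 1%:M / ((nrm (invmx (Ab i.+1)))^-1 - s).
Proof.
move=> hi s pos; apply: (ler_div_of_le_mulD _ pos).
  by rewrite addr_ge0 ?mulr_ge0 ?nrm_ge0 ?tau_ge0 ?omega_ge0.
have := tridiag_inv_recurrence hi hi; rewrite eqxx.
move/(nrm_three_term_upper nrmP (A_unit hi))/le_trans; apply.
rewrite ler_wpM2l ?nrm_ge0 // lerD2l mulrDl.
by apply: lerD; [apply: nrm_sub_blk_le|apply: nrm_super_blk_le].
Qed.

End TridiagonalInverse.

Theorem theorem2p6 (C : numClosedFieldType) (m n : nat) (nrm : 'M[C]_m -> C)
  (Ab Bb Cb : nat -> 'M[C]_m) :
  submult_mxnorm nrm ->
  (2 <= n)%N ->
  tridiag n Ab Bb Cb \in unitmx ->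
  (forall i, (1 <= i < n)%N -> Bb i \in unitmx /\ Cb i \in unitmx) ->
  (forall i, (1 <= i <= n)%N ->
     Ab i \in unitmx /\
     nrm (invmx (Ab i) *m Cext Cb i.-1) + nrm (invmx (Ab i) *m Bext n Bb i) <= 1) ->
  nrm (invmx (Ab 1%N) *m Bb 1%N) < 1 ->
  nrm (invmx (Ab n) *m Cb n.-1) < 1 ->
  let Z := blk (invmx (tridiag n Ab Bb Cb)) in
  let t := tau n nrm Ab Bb Cb in
  let w := omega n nrm Ab Bb Cb in
  (* 0-based block indices i, j correspond to the paper's i+1, j+1 *)
  (forall i j : 'I_n, (i < j)%N ->
     nrm (Z i j) <= nrm (Z j j) * \prod_((i.+1) <= k < j.+1) t k) /\
  (forall i j : 'I_n, (j < i)%N ->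
     nrm (Z i j) <= nrm (Z j j) * \prod_((j.+2) <= k < i.+2) w k) /\
  (forall i : 'I_n,
     let p := (val i).+1 in
     nrm 1%:M / (nrm (Ab p) + t p.-1 * nrm (Cext Cb p.-1) + w p.+1 * nrm (Bext n Bb p))
       <= nrm (Z i i) /\
     (0 < (nrm (invmx (Ab p)))^-1 - t p.-1 * nrm (Cext Cb p.-1) - w p.+1 * nrm (Bext n Bb p) ->
      nrm (Z i i) <= nrm 1%:M /
        ((nrm (invmx (Ab p)))^-1 - t p.-1 * nrm (Cext Cb p.-1) - w p.+1 * nrm (Bext n Bb p)))).
Proof.
move=> nrmP _ T_unit BC_unit A_dom _ _ Z t w.
split; [|split].
- move=> i j ij; rewrite /Z -!blk_natE.
  exact: blk_decay_above (ltnW ij) (ltn_ord j).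
- move=> i j ji; rewrite /Z -!blk_natE.
  exact: blk_decay_below (ltnW ji) (ltn_ord i).
- move=> i p; rewrite /Z /p /t /w -blk_natE /=; split; first exact: blk_diag_lower.
  by rewrite -addrA -opprD; apply: blk_diag_upper.
Qed.
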